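(* Let $k$ be an uncountable algebraically closed field and let $C_1,C_2$ be noncentral conjugacy classes of $G=SL_2(k)$. There exists $(x_1,x_2)\in C_1\times C_2$ such that $\langle x_1,x_2\rangle$ is Zariski dense in $G$ if and only if it is not the case that both $C_1$ and $C_2$ are classes of involutions modulo the center (i.e. classes whose images in $G/Z(G)$ consist of elements of order $2$). *)

From HB Require Import structures.
From mathcomp Require Import all_boot all_order all_algebra.
From mathcomp Require Import mpoly.
Set Implicit Arguments. Unset Strict Implicit. Unset Printing Implicit Defensive.
Import GRing.Theory.
Local Open Scope ring_scope.

Definition uncountable (T : Type) : Prop := ~ exists f : T -> nat, injective f.

Definition inSL2 (k : fieldType) (A : 'M[k]_2) : Prop := \det A = 1.

Definition conj_class (k : fieldType) (g x : 'M[k]_2) : Prop :=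
  exists a : 'M[k]_2, inSL2 a /\ x = invmx a *m g *m a.

(* The center of SL_2(k) consists of the scalar matrices in it. *)
Definition central (k : fieldType) (g : 'M[k]_2) : Prop := is_scalar_mx g.

Definition involution_mod_center (k : fieldType) (g : 'M[k]_2) : Prop :=
  ~ central g /\ central (g *m g).

Inductive gen2 (k : fieldType) (x1 x2 : 'M[k]_2) : 'M[k]_2 -> Prop :=
  | gen2_1 : gen2 x1 x2 1%:M
  | gen2_l1 h : gen2 x1 x2 h -> gen2 x1 x2 (x1 *m h)
  | gen2_l2 h : gen2 x1 x2 h -> gen2 x1 x2 (x2 *m h)
  | gen2_li1 h : gen2 x1 x2 h -> gen2 x1 x2 (invmx x1 *m h)
  | gen2_li2 h : gen2 x1 x2 h -> gen2 x1 x2 (invmx x2 *m h).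

(* Coordinates of a 2x2 matrix in affine 4-space: (a00, a01, a10, a11). *)
Definition mx_coords (k : fieldType) (A : 'M[k]_2) (i : 'I_4) : k :=
  A (inord (i %/ 2)) (inord (i %% 2)).

Definition zariski_dense_SL2 (k : fieldType) (H : 'M[k]_2 -> Prop) : Prop :=
  forall p : {mpoly k[4]},
    (forall h, H h -> p.@[mx_coords h] = 0) ->
    forall g, inSL2 g -> p.@[mx_coords g] = 0.

(* A noncentral element of SL_2(k) is conjugate to the companion matrix of its
   characteristic polynomial, so a noncentral class is determined by its trace,
   and it consists of involutions modulo the center exactly when the trace is 0.

   If both traces vanish, x1 and x2 generate a dihedral group modulo the center,
   and the polynomial h |-> tr h * tr (h x1), which is not identically zero on
   SL_2(k), vanishes on it.

   Otherwise take x1 = A and x2 = A^-1 diag(t, t^-1) with the prescribed traces,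
   where t is not a root of unity (k is uncountable) and avoids finitely many
   bad values. The Zariski closure of <x1, x2> is closed under products and
   contains the infinitely many points diag(t^n, t^-n) of the diagonal torus,
   hence the whole torus. Conjugating the torus by an element of the closure
   with vanishing lower-right entry produces both unipotent subgroups, and
   these generate SL_2(k). *)

From HB Require Import structures.
From mathcomp Require Import all_boot all_order all_algebra.
From mathcomp Require Import mpoly.
From mathcomp Require Import ring.
From Stdlib Require Import Classical.
Set Implicit Arguments. Unset Strict Implicit. Unset Printing Implicit Defensive.
Import GRing.Theory.
Local Open Scope ring_scope.

Section Matrix2.
Variable R : comNzRingType.

Definition mx2 (a b c d : R) : 'M[R]_2 :=
  \matrix_(i, j) if (i : nat) == 0%N then (if (j : nat) == 0%N then a else b)
                 else (if (j : nat) == 0%N then c else d).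

Lemma mx2E (A : 'M[R]_2) : A = mx2 (A 0 0) (A 0 1) (A 1 0) (A 1 1).
Proof.
apply/matrixP => i j; rewrite mxE.
by case: i => [[|[|//]] Hi]; case: j => [[|[|//]] Hj]; congr (A _ _); apply/val_inj.
Qed.

Lemma mul_mx2 a b c d a' b' c' d' :
  mx2 a b c d *m mx2 a' b' c' d' =
  mx2 (a * a' + b * c') (a * b' + b * d') (c * a' + d * c') (c * b' + d * d').
Proof.
apply/matrixP => i j; rewrite !mxE !big_ord_recr big_ord0 /= !mxE /= add0r.
by case: i => [[|[|//]] Hi]; case: j => [[|[|//]] Hj].
Qed.

Lemma det_mx2 a b c d : \det (mx2 a b c d) = a * d - b * c.
Proof.
rewrite (expand_det_row _ 0) !big_ord_recr big_ord0 /= add0r /cofactor !mxE /=.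
by rewrite !det_mx11 /= !mxE /= !(add0n, addn0, expr0, expr1); ring.
Qed.

Lemma tr_mx2 a b c d : \tr (mx2 a b c d) = a + d.
Proof. by rewrite /mxtrace !big_ord_recr big_ord0 !mxE /= add0r. Qed.

Lemma scalar_mx2 a : a%:M = mx2 a 0 0 a.
Proof. by rewrite {1}(mx2E a%:M) !mxE. Qed.

Lemma is_scalar_mx2 a b c d :
  is_scalar_mx (mx2 a b c d) <-> [/\ b = 0, c = 0 & a = d].
Proof.
split; last by move=> [-> -> ->]; rewrite -scalar_mx2 scalar_mx_is_scalar.
move=> /is_scalar_mxP [x]; rewrite scalar_mx2 => /matrixP E.
have := E 0 0; have := E 0 1; have := E 1 0; have := E 1 1.
by rewrite !mxE /= => -> -> -> ->.
Qed.

Lemma mx2_Cayley_Hamilton (A : 'M[R]_2) : A *m A = \tr A *: A - (\det A)%:M.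
Proof.
rewrite [in LHS](mx2E A) [in \tr _](mx2E A) [in \det _](mx2E A).
rewrite mul_mx2 tr_mx2 det_mx2 scalar_mx2 [in RHS](mx2E A).
apply/matrixP => i j; rewrite !mxE.
by case: i => [[|[|//]] Hi]; case: j => [[|[|//]] Hj] /=; ring.
Qed.

Lemma mx2_anticomm_tr0 (x y : 'M[R]_2) : \tr x = 0 -> \tr y = 0 ->
  x *m y + y *m x = (\tr (x *m y))%:M.
Proof.
rewrite [in \tr x](mx2E x) [in \tr y](mx2E y) !tr_mx2.
move=> /eqP; rewrite addr_eq0 => /eqP tx /eqP; rewrite addr_eq0 => /eqP ty.
rewrite (mx2E x) (mx2E y) !mul_mx2 tr_mx2 scalar_mx2 tx ty; apply/matrixP => i j.
by rewrite !mxE; case: i => [[|[|//]] Hi]; case: j => [[|[|//]] Hj] /=; ring.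
Qed.

End Matrix2.

Lemma invmxM (R : comUnitRingType) n (A B : 'M[R]_n) : A \in unitmx -> B \in unitmx ->
  invmx (A *m B) = invmx B *m invmx A.
Proof.
move=> uA uB; have uAB : A *m B \in unitmx by rewrite unitmx_mul uA uB.
by rewrite -[RHS](mulKmx uAB) -mulmxA (mulmxA B) mulmxV // mul1mx mulmxV // mulmx1.
Qed.

Section Matrix2Field.
Variable k : fieldType.
Implicit Types (a b c d u v z : k) (g x : 'M[k]_2).

Lemma unitmx_SL2 g : inSL2 g -> g \in unitmx.
Proof. by rewrite unitmxE => ->; apply: unitr1. Qed.

Lemma invmx_mx2 a b c d : a * d - b * c = 1 ->
  invmx (mx2 a b c d) = mx2 d (- b) (- c) a.
Proof.
move=> det1; have uA : mx2 a b c d \in unitmx by apply: unitmx_SL2; rewrite /inSL2 det_mx2.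
have AA' : mx2 a b c d *m mx2 d (- b) (- c) a = 1%:M.
  by rewrite mul_mx2 scalar_mx2 -det1; congr mx2; ring.
by rewrite -[RHS](mulKmx uA) AA' mulmx1.
Qed.

Lemma involution_mod_centerE g : ~ central g ->
  involution_mod_center g <-> \tr g = 0.
Proof.
rewrite /involution_mod_center /central mx2_Cayley_Hamilton => ncg; split.
  case=> _ /is_scalar_mxP [c sqg]; case: (eqVneq (\tr g) 0) => // tg0.
  exfalso; apply/ncg/is_scalar_mxP; exists ((c + \det g) / \tr g).
  have /(congr1 (fun B => (\tr g)^-1 *: B)) /= : \tr g *: g = (c + \det g)%:M.
    by rewrite raddfD /= -sqg subrK.
  by rewrite scalerA mulVf // scale1r scale_scalar_mx mulrC.
move=> tg0; split => //; rewrite tg0 scale0r sub0r.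
by apply/is_scalar_mxP; exists (- \det g); rewrite raddfN.
Qed.

Lemma sqr_mx2_tr0 x : inSL2 x -> \tr x = 0 -> x *m x = - 1%:M.
Proof. by move=> dx tx; rewrite mx2_Cayley_Hamilton tx dx scale0r sub0r. Qed.

Lemma invmx_tr0 x : inSL2 x -> \tr x = 0 -> invmx x = - x.
Proof.
move=> dx tx.
by rewrite -[RHS](mulKmx (unitmx_SL2 dx)) mulmxN sqr_mx2_tr0 // opprK mulmx1.
Qed.

Definition torus2 u := mx2 u 0 0 u^-1.
Definition upper2 z := mx2 1 z 0 1.
Definition lower2 z := mx2 1 0 z 1.

Lemma torus2M u v : u != 0 -> v != 0 -> torus2 u *m torus2 v = torus2 (u * v).
Proof. by move=> u0 v0; rewrite mul_mx2; congr mx2; rewrite ?invfM; ring. Qed.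

Lemma det_torus2 u : u != 0 -> inSL2 (torus2 u).
Proof. by move=> u0; rewrite /inSL2 det_mx2 mulfV // mulr0 subr0. Qed.

Lemma invmx_torus2 u : u != 0 -> invmx (torus2 u) = torus2 u^-1.
Proof.
by move=> u0; rewrite invmx_mx2 /torus2 ?oppr0 ?invrK // mulr0 subr0 mulfV.
Qed.

Lemma upper2D z1 z2 : upper2 z1 *m upper2 z2 = upper2 (z1 + z2).
Proof. by rewrite mul_mx2; congr mx2; ring. Qed.

Lemma lower2D z1 z2 : lower2 z1 *m lower2 z2 = lower2 (z1 + z2).
Proof. by rewrite mul_mx2; congr mx2; ring. Qed.

Lemma SL2_unipotent_decomposition g : inSL2 g ->
  exists a b c d, g = lower2 a *m upper2 b *m lower2 c *m upper2 d.
Proof.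
have decomp p q r s : r != 0 -> p * s - q * r = 1 ->
    mx2 p q r s = upper2 ((p - 1) / r) *m lower2 r *m upper2 ((s - 1) / r).
  move=> r0 det1; have -> : q = (p * s - 1) / r by rewrite -det1; field.
  by rewrite !mul_mx2; congr mx2; field.
rewrite /inSL2 (mx2E g) det_mx2.
set p := g 0 0; set q := g 0 1; set r := g 1 0; set s := g 1 1 => det1.
case: (eqVneq r 0) => [r0|r0]; last first.
  exists 0, ((p - 1) / r), r, ((s - 1) / r).
  by rewrite {1}/lower2 -scalar_mx2 mul1mx; apply: decomp.
have p0 : p != 0.
  by apply/eqP => p0; move: det1; rewrite p0 r0 mul0r mulr0 subrr => /eqP; rewrite eq_sym oner_eq0.
have -> : mx2 p q r s = lower2 (-1) *m mx2 p q (p + r) (q + s).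
  by rewrite mul_mx2; congr mx2; ring.
exists (-1), ((p - 1) / (p + r)), (p + r), ((q + s - 1) / (p + r)).
rewrite (decomp p q (p + r) (q + s)) ?mulmxA // r0 ?addr0 //.
by rewrite -det1 r0; ring.
Qed.

End Matrix2Field.

Section ZariskiClosure.
Variable k : fieldType.
Implicit Types (H : 'M[k]_2 -> Prop) (g h y : 'M[k]_2) (p : {mpoly k[4]}).

Definition zariski_closure H g :=
  forall p, (forall h, H h -> p.@[mx_coords h] = 0) -> p.@[mx_coords g] = 0.

Lemma zariski_closure_sub H h : H h -> zariski_closure H h.
Proof. by move=> Hh p; apply. Qed.

Lemma zariski_closure_idem H g :
  zariski_closure (zariski_closure H) g -> zariski_closure H g.
Proof. by move=> clg p pH; apply: clg => h clh; apply: clh. Qed.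

Definition mx_entry (i j : 'I_2) : {mpoly k[4]} := 'X_(inord (i * 2 + j)).

Lemma meval_mx_entry y i j : (mx_entry i j).@[mx_coords y] = y i j.
Proof.
rewrite mevalXU /mx_coords inordK; last by case: i => [[|[|//]] ?]; case: j => [[|[|//]] ?].
by rewrite divnMDl // modnMDl !modn_small ?divn_small ?addn0 // !inord_val.
Qed.

Lemma mx_coords_mx2 (a b c d : k) (i : 'I_4) :
  mx_coords (mx2 a b c d) i = nth 0 [:: a; b; c; d] i.
Proof. by rewrite /mx_coords mxE; case: i => [[|[|[|[|//]]]] Hi] /=; rewrite !inordK. Qed.

Definition mpoly_tr : {mpoly k[4]} := mx_entry 0 0 + mx_entry 1 1.

Lemma meval_mpoly_tr y : mpoly_tr.@[mx_coords y] = \tr y.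
Proof. by rewrite mevalD !meval_mx_entry [in RHS](mx2E y) tr_mx2. Qed.

Definition mx_polymap (F : 'M[k]_2 -> 'M[k]_2) :=
  exists q : 'I_2 -> 'I_2 -> {mpoly k[4]},
    forall y i j, (q i j).@[mx_coords y] = F y i j.

Lemma mpoly_comp_polymap F p : mx_polymap F ->
  exists p', forall y, p'.@[mx_coords y] = p.@[mx_coords (F y)].
Proof.
move=> [q Fq]; exists (p \mPo [tuple q (inord (i %/ 2)) (inord (i %% 2)) | i < 4]) => y.
by rewrite comp_mpoly_meval; apply: meval_eq => i; rewrite tnth_mktuple Fq.
Qed.

Lemma polymap_mull g : mx_polymap (mulmx g).
Proof.
exists (fun i j => \sum_l (g i l)%:MP * mx_entry l j) => y i j.
by rewrite raddf_sum /= mxE; apply: eq_bigr => l _; rewrite mevalM mevalC meval_mx_entry.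
Qed.

Lemma polymap_mulr g : mx_polymap (mulmx^~ g).
Proof.
exists (fun i j => \sum_l mx_entry i l * (g l j)%:MP) => y i j.
by rewrite raddf_sum /= mxE; apply: eq_bigr => l _; rewrite mevalM mevalC meval_mx_entry.
Qed.

Lemma zariski_closure_polymap F H H' g : mx_polymap F ->
  (forall h, H h -> H' (F h)) -> zariski_closure H g -> zariski_closure H' (F g).
Proof.
move=> /mpoly_comp_polymap compF FHH' clg p pH'; have [p' p'E] := compF p.
by rewrite -p'E; apply: clg => h Hh; rewrite p'E; apply/pH'/FHH'.
Qed.

Variable H : 'M[k]_2 -> Prop.
Hypothesis mulH : forall a b, H a -> H b -> H (a *m b).

Lemma zariski_closure_mul g h :
  zariski_closure H g -> zariski_closure H h -> zariski_closure H (g *m h).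
Proof.
move=> clg clh; apply: zariski_closure_idem.
apply: (zariski_closure_polymap (polymap_mull g)) clh => h' Hh'.
by apply: (zariski_closure_polymap (polymap_mulr h')) clg => a Ha; apply: mulH.
Qed.

End ZariskiClosure.

Section Torus.
Variable k : fieldType.

Lemma meval_torus2_laurent (p : {mpoly k[4]}) : exists (Q : {poly k}) (N : nat),
  forall u, u != 0 -> Q.[u] = u ^+ N * p.@[mx_coords (torus2 u)].
Proof.
elim/mpolyind: p => [|c m p _ _ [Q [N QE]]].
  by exists 0, 0%N => u _; rewrite meval0 horner0 mulr0.
set e0 := m ord0; set e1 := m (lift ord0 ord0); set e2 := m (lift ord0 (lift ord0 ord0)).
set e3 := m (lift ord0 (lift ord0 (lift ord0 ord0))).
exists ((c * 0 ^+ e1 * 0 ^+ e2) *: 'X^e0 * 'X^N + Q * 'X^e3), (e3 + N)%N => u u0.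
rewrite mevalD mevalZ mevalX !big_ord_recl big_ord0 !mx_coords_mx2 /= mulr1.
rewrite hornerD !hornerM hornerZ !hornerXn QE // -/e0 -/e1 -/e2 -/e3 exprD exprVn.
by field; rewrite expf_neq0.
Qed.

Lemma expf_inj_nonunity (t : k) : t != 0 -> (forall n, (0 < n)%N -> t ^+ n != 1) ->
  injective (fun n => t ^+ n).
Proof.
move=> t0 tn; suff le_inj i j : (i <= j)%N -> t ^+ i = t ^+ j -> i = j.
  move=> i j /= eij; case: (leqP i j) => [le_ij | /ltnW le_ji].
    exact: le_inj le_ij eij.
  exact/esym/(le_inj _ _ le_ji)/esym.
move=> le_ij eij; case: (ltngtP i j) => // [lt_ij|]; last by rewrite ltnNge le_ij.
have := tn (j - i)%N; rewrite subn_gt0 lt_ij => /(_ isT) /eqP [].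
have ti0 : t ^+ i != 0 by rewrite expf_neq0.
by apply: (mulfI ti0); rewrite -exprD (subnKC (ltnW lt_ij)) -eij mulr1.
Qed.

Lemma zariski_closure_torus2 (H : 'M[k]_2 -> Prop) (t : k) :
  t != 0 -> (forall n, (0 < n)%N -> t ^+ n != 1) -> (forall n, H (torus2 (t ^+ n))) ->
  forall u, u != 0 -> zariski_closure H (torus2 u).
Proof.
move=> t0 tn Ht u u0 p pH; have [Q [N QE]] := meval_torus2_laurent p.
suff Q0 : Q = 0.
  apply/eqP; move: (QE u u0); rewrite Q0 horner0 => /esym/eqP.
  by rewrite mulf_eq0 expf_eq0 (negbTE u0) andbF.
apply/eqP; apply: contraT => Q0.
(* Otherwise the size Q distinct powers t^n, n < size Q, would be roots of Q. *)
have := max_poly_roots Q0 (rs := mkseq (fun n => t ^+ n) (size Q)).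
rewrite size_mkseq ltnn; apply.
  by apply/allP => _ /mapP [n _ ->]; rewrite /root QE ?expf_neq0 // pH ?mulr0.
by rewrite map_inj_uniq ?iota_uniq //; apply: expf_inj_nonunity.
Qed.
End Torus.

Section ClosedField.
Variable k : closedFieldType.

Lemma closed_sqrt (z : k) : exists v, v ^+ 2 = z.
Proof.
have /closed_rootP [v] : size ('X^2 - z%:P) != 1 by rewrite size_XnsubC.
by rewrite rootE !hornerE subr_eq0 => /eqP; exists v.
Qed.

Lemma closed_param_sqr (c w : k) : c != 0 -> w != c ->
  exists2 u, u != 0 & w = c * (1 - u ^+ 2).
Proof.
move=> c0 wc; have [u uE] := closed_sqrt (1 - w / c).
exists u; last by rewrite uE opprB addrC subrK mulrC divfK.
apply: contra_neq wc => u0; move: uE; rewrite u0 expr0n /= => /esym/eqP.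
by rewrite subr_eq0 => /eqP/(congr1 ( *%R^~ c)); rewrite /= divfK // mul1r.
Qed.

Lemma closed_countable_of_roots (P : nat -> {poly k}) : (forall n, P n != 0) ->
  (forall t, exists n, root (P n) t) -> exists f : k -> nat, injective f.
Proof.
move=> P0 Proot; pose roots n := sval (closed_field_poly_normal (P n)).
have rootsP n t : root (P n) t -> t \in roots n.
  rewrite /roots; case: closed_field_poly_normal => r /= {1}->.
  by rewrite rootZ ?lead_coef_eq0 // root_prod_XsubC.
exists (fun t => let n := ex_minn (Proot t) in pickle (n, index t (roots n))).
move=> t t' /(pcan_inj pickleK).
case: ex_minnP => n Pnt _; case: ex_minnP => n' Pnt' _ [en eq_index].
rewrite -en in Pnt' eq_index.
by rewrite -(nth_index 0 (rootsP _ _ Pnt)) eq_index nth_index // rootsP.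
Qed.

Lemma uncountable_exists_nonunity (R : {poly k}) : uncountable k -> R != 0 ->
  exists t, ~~ root R t /\ forall n, (0 < n)%N -> t ^+ n != 1.
Proof.
move=> unc R0; apply: NNPP => no_t; apply: unc.
pose P n : {poly k} := if n is _.+1 then 'X^n - 1 else R.
apply: (@closed_countable_of_roots P) => [[|n]|t] //=.
  by rewrite -size_poly_eq0 -polyC1 size_XnsubC.
case: (boolP (root R t)) => [Rt|nRt]; first by exists 0%N.
have [n [n0 tn]] : exists n, (0 < n)%N /\ t ^+ n = 1.
  apply: NNPP => no_n; apply: no_t; exists t; split => // n n0.
  by apply/eqP => tn; apply: no_n; exists n.
by exists n; case: n n0 tn => // n _ tn; rewrite rootE !hornerE tn subrr.
Qed.
End ClosedField.

Section UnipotentClosure.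
Variable k : closedFieldType.
Variable H : 'M[k]_2 -> Prop.
Hypothesis mulH : forall a b, H a -> H b -> H (a *m b).
Local Notation cl := (zariski_closure H).
Hypothesis cl_torus2 : forall u, u != 0 -> cl (torus2 u).

Let cl_mul := zariski_closure_mul mulH.

Lemma zariski_closure_additive (F : k -> 'M[k]_2) (c : k) : c != 0 ->
  (forall z1 z2, F z1 *m F z2 = F (z1 + z2)) ->
  (forall u, u != 0 -> cl (F (c * (1 - u ^+ 2)))) -> forall z, cl (F z).
Proof.
move=> c0 FD Fu z.
have clF w : w != c -> cl (F w) by move=> /(closed_param_sqr c0) [u u0 ->]; apply: Fu.
have /closed_nonrootP [z1] : ('X - c%:P) * ('X - (z - c)%:P) != 0.
  by rewrite mulf_neq0 ?polyXsubC_eq0.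
rewrite rootM !root_XsubC negb_or => /andP [z1c z1zc].
rewrite -(subrK z1 z) -FD; apply: cl_mul; apply: clF => //.
by apply: contra_neq z1zc => <-; rewrite opprB addrC subrK.
Qed.

Variables e f : k.
Hypotheses (e0 : e != 0) (f0 : f != 0).
Hypotheses (clW : cl (mx2 e f (- f^-1) 0)) (clW' : cl (mx2 0 (- f) f^-1 e)).

Lemma zariski_closure_upper2 z : cl (upper2 z).
Proof.
apply: (zariski_closure_additive (c := e * f)); rewrite ?mulf_neq0 //; first exact: upper2D.
move=> u u0; have -> : upper2 (e * f * (1 - u ^+ 2)) =
    torus2 u *m (mx2 e f (- f^-1) 0 *m torus2 u *m mx2 0 (- f) f^-1 e).
  by rewrite /upper2 /torus2 !mul_mx2; congr mx2; field; rewrite f0 u0.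
by apply: cl_mul; [apply: cl_torus2 | apply: cl_mul; [apply: cl_mul; [|apply: cl_torus2]|]].
Qed.

Lemma zariski_closure_lower2 z : cl (lower2 z).
Proof.
apply: (zariski_closure_additive (c := - (e / f))); rewrite ?oppr_eq0 ?mulf_neq0 ?invr_eq0 //.
  exact: lower2D.
move=> u u0; have -> : lower2 (- (e / f) * (1 - u ^+ 2)) =
    mx2 0 (- f) f^-1 e *m torus2 u *m mx2 e f (- f^-1) 0 *m torus2 u.
  by rewrite /lower2 /torus2 !mul_mx2; congr mx2; field; rewrite f0 u0.
by apply: cl_mul; [apply: cl_mul; [apply: cl_mul; [|apply: cl_torus2]|]|apply: cl_torus2].
Qed.

Lemma zariski_closure_SL2 g : inSL2 g -> cl g.
Proof.
move=> /SL2_unipotent_decomposition [a [b [c [d ->]]]].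
apply: cl_mul; last exact: zariski_closure_upper2.
apply: cl_mul; last exact: zariski_closure_lower2.
by apply: cl_mul; [exact: zariski_closure_lower2 | exact: zariski_closure_upper2].
Qed.
End UnipotentClosure.

Section Conjugacy.
Variable k : closedFieldType.
Implicit Types g x : 'M[k]_2.

Lemma SL2_conj_companion x : inSL2 x -> ~ central x ->
  exists2 P : 'M[k]_2, inSL2 P & x *m P = P *m mx2 0 (-1) 1 (\tr x).
Proof.
rewrite /inSL2 /central (mx2E x) det_mx2 tr_mx2 is_scalar_mx2.
set p := x 0 0; set q := x 0 1; set r := x 1 0; set s := x 1 1 => det1 ncx.
suff [P0 dP0 xP0] : exists2 P0 : 'M[k]_2, \det P0 != 0 &
    mx2 p q r s *m P0 = P0 *m mx2 0 (-1) 1 (p + s).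
  have [mu mu2] := closed_sqrt (\det P0)^-1.
  by exists (mu *: P0); rewrite /inSL2 ?detZ ?mu2 ?mulVf // -scalemxAr xP0 scalemxAl.
have qr : q * r = p * s - 1 by rewrite -det1; ring.
case: (eqVneq r 0) => [r0|r0]; last first.
  exists (mx2 1 p 0 r); first by rewrite det_mx2 mul1r mulr0 subr0.
  by rewrite !mul_mx2; congr mx2; rewrite ?qr; ring.
case: (eqVneq q 0) => [q0|q0]; last first.
  exists (mx2 0 q 1 s); first by rewrite det_mx2 mul0r mulr1 sub0r oppr_eq0.
  by rewrite !mul_mx2; congr mx2; rewrite ?(mulrC r q) ?qr; ring.
have ps : p != s by apply/eqP => ps; apply: ncx.
exists (mx2 1 p 1 s); first by rewrite det_mx2 mulr1 mul1r subr_eq0 eq_sym.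
have ps1 : p * s = 1 by rewrite -det1 q0 r0 mulr0 subr0.
have p0 : p != 0 by apply: contra_eq_neq ps1 => ->; rewrite mul0r eq_sym oner_neq0.
have -> : s = p^-1 by apply: (mulfI p0); rewrite ps1 mulfV.
by rewrite !mul_mx2 q0 r0; congr mx2; field.
Qed.

Lemma conj_class_of_tr g x : inSL2 g -> inSL2 x -> ~ central g -> ~ central x ->
  \tr g = \tr x -> conj_class g x.
Proof.
move=> sg sx ncg ncx tgx.
have [P dP xP] := SL2_conj_companion sx ncx.
have [Q dQ gQ] := SL2_conj_companion sg ncg.
rewrite tgx in gQ; set C := mx2 0 (-1) 1 (\tr x) in xP gQ.
have [uP uQ] := (unitmx_SL2 dP, unitmx_SL2 dQ).
have Px : invmx P *m x = C *m invmx P.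
  by rewrite -[LHS](mulmxK uP) -(mulmxA _ x) xP mulmxA mulVmx // mul1mx.
have ax : Q *m invmx P *m x = g *m (Q *m invmx P).
  by rewrite -mulmxA Px !mulmxA gQ.
exists (Q *m invmx P); split; first by rewrite /inSL2 det_mulmx det_inv dP dQ invr1 mulr1.
by rewrite -mulmxA -ax mulKmx // unitmx_mul uQ unitmx_inv.
Qed.

Lemma conj_class_tr_det g x : conj_class g x -> \tr x = \tr g /\ \det x = \det g.
Proof.
move=> [a [da ->]]; have ua := unitmx_SL2 da; split.
  by rewrite mxtrace_mulC mulmxA mulmxV // mul1mx.
by rewrite !det_mulmx det_inv da invr1 mul1r mulr1.
Qed.
End Conjugacy.

Section TracelessPair.
Variable k : fieldType.
Variables x1 x2 : 'M[k]_2.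
Hypotheses (sx1 : inSL2 x1) (sx2 : inSL2 x2) (tx1 : \tr x1 = 0) (tx2 : \tr x2 = 0).

(* Modulo the center, x1 and x2 are involutions generating a dihedral group:
   its rotations lie in the span of 1 and x1 x2, its reflections in that of x1 and x2. *)
Definition dihedral_form h := (exists a b, h = a *: 1%:M + b *: (x1 *m x2)) \/
                             (exists a b, h = a *: x1 + b *: x2).

Let sqr_x1 := sqr_mx2_tr0 sx1 tx1.
Let sqr_x2 := sqr_mx2_tr0 sx2 tx2.
Let x2x1 : x2 *m x1 = \tr (x1 *m x2) *: 1%:M - x1 *m x2.
Proof. by rewrite scalemx1 -(mx2_anticomm_tr0 tx1 tx2) addrAC subrr add0r. Qed.

Lemma dihedral_form_mull1 h : dihedral_form h -> dihedral_form (x1 *m h).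
Proof.
case=> [] [a [b ->]]; rewrite mulmxDr -!scalemxAr.
  by right; exists a, (- b); rewrite mulmx1 mulmxA sqr_x1 mulNmx mul1mx scalerN scaleNr.
by left; exists (- a), b; rewrite sqr_x1 scalerN scaleNr.
Qed.

Lemma dihedral_form_mull2 h : dihedral_form h -> dihedral_form (x2 *m h).
Proof.
set t := \tr (x1 *m x2).
case=> [] [a [b ->]]; rewrite mulmxDr -!scalemxAr.
  right; exists b, (a + b * t).
  rewrite mulmx1 mulmxA x2x1 mulmxBl -scalemxAl mul1mx -mulmxA sqr_x2 mulmxN mulmx1.
  by apply/matrixP => i j; rewrite !mxE; ring.
left; exists (a * t - b), (- a); rewrite x2x1 sqr_x2.
by apply/matrixP => i j; rewrite !mxE; set d := 1 *+ _; ring.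
Qed.

Lemma dihedral_formN h : dihedral_form h -> dihedral_form (- h).
Proof.
case=> [] [a [b ->]]; [left | right]; exists (- a), (- b);
  by apply/matrixP => i j; rewrite !mxE; ring.
Qed.

Lemma gen2_dihedral_form h : gen2 x1 x2 h -> dihedral_form h.
Proof.
elim=> {h} [|h _ IH|h _ IH|h _ IH|h _ IH].
- by left; exists 1, 0; rewrite scale1r scale0r addr0.
- exact: dihedral_form_mull1.
- exact: dihedral_form_mull2.
- by rewrite invmx_tr0 // mulNmx; apply/dihedral_formN/dihedral_form_mull1.
- by rewrite invmx_tr0 // mulNmx; apply/dihedral_formN/dihedral_form_mull2.
Qed.

Lemma dihedral_form_tr h : dihedral_form h -> \tr h * \tr (h *m x1) = 0.
Proof.
case=> [] [a [b ->]]; last by rewrite mxtraceD !mxtraceZ tx1 tx2 !mulr0 addr0 mul0r.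
rewrite mulmxDl -!scalemxAl mul1mx mxtraceD !mxtraceZ mxtrace_mulC mulmxA sqr_x1.
by rewrite mulNmx mul1mx raddfN /= tx1 tx2 oppr0 !mulr0 addr0 mulr0.
Qed.
End TracelessPair.

Section NotDense.
Variable k : closedFieldType.

Lemma exists_SL2_tr_trmul_neq0 (x : 'M[k]_2) : \det x != 0 ->
  exists2 g, inSL2 g & \tr g * \tr (g *m x) != 0.
Proof.
rewrite (mx2E x) det_mx2; set p := x 0 0; set q := x 0 1; set r := x 1 0; set s := x 1 1.
move=> dx; pose Q : {poly k} := r *: 'X^2 + p *: 'X - q%:P.
have QE u : Q.[u] = r * u ^+ 2 + p * u - q.
  by rewrite /Q !hornerD hornerN !hornerZ hornerXn hornerX hornerC.
have Q0 : Q != 0.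
  apply: contra dx => /eqP Q0.
  move: (congr1 (coefp 0) Q0) (congr1 (coefp 1) Q0) (congr1 (coefp 2) Q0).
  rewrite /= !coefD !coefN !coefZ !coefXn !coefX !coefC /=.
  rewrite !mulr0 !mulr1 !subr0 !add0r !addr0 => /eqP; rewrite oppr_eq0 => /eqP -> -> ->.
  by rewrite !mul0r subrr.
have /closed_nonrootP [z] : 'X * Q != 0 by rewrite mulf_neq0 ?polyX_eq0.
rewrite rootM rootX negb_or => /andP [z0 Qz].
exists (mx2 1 z (- z^-1) 0); first by rewrite /inSL2 det_mx2 mulr0 sub0r mulrN opprK mulfV.
rewrite mul_mx2 !tr_mx2.
have -> : (1 + 0) * (1 * p + z * r + (- z^-1 * q + 0 * s)) = Q.[z] / z.
  by rewrite QE; field.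
by rewrite mulf_neq0 ?invr_eq0.
Qed.

Lemma gen2_tr0_not_dense (x1 x2 : 'M[k]_2) : inSL2 x1 -> inSL2 x2 ->
  \tr x1 = 0 -> \tr x2 = 0 -> ~ zariski_dense_SL2 (gen2 x1 x2).
Proof.
move=> sx1 sx2 tx1 tx2 dense.
have [ptrx ptrxE] := mpoly_comp_polymap (mpoly_tr k) (polymap_mulr x1).
have trE h : (mpoly_tr k * ptrx).@[mx_coords h] = \tr h * \tr (h *m x1).
  by rewrite mevalM ptrxE !meval_mpoly_tr.
have [|g sg] := @exists_SL2_tr_trmul_neq0 x1; first by rewrite sx1 oner_neq0.
apply/negP; rewrite negbK -trE; apply/eqP/dense => // h.
by move=> /(gen2_dihedral_form sx1 sx2 tx1 tx2) /(dihedral_form_tr sx1 tx1 tx2); rewrite trE.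
Qed.
End NotDense.

Lemma gen2_mul (k : fieldType) (x1 x2 g h : 'M[k]_2) :
  gen2 x1 x2 g -> gen2 x1 x2 h -> gen2 x1 x2 (g *m h).
Proof.
elim=> [|{}g _ IH|{}g _ IH|{}g _ IH|{}g _ IH] Hh; rewrite ?mul1mx //.
all: by rewrite -mulmxA; constructor; apply: IH.
Qed.

Section DensePair.
Variable k : closedFieldType.
Variables a d t : k.
Hypotheses (t0 : t != 0) (t_nonunity : forall n, (0 < n)%N -> t ^+ n != 1).
Hypotheses (d0 : d != 0) (ad1 : a * d != 1) (ad2 : (a * d) *+ 2 != 1).

Local Notation A := (mx2 a 1 (a * d - 1) d).
Local Notation G := (gen2 A (invmx A *m torus2 t)).
Local Notation cl := (zariski_closure G).

Let sA : inSL2 A. Proof. by rewrite /inSL2 det_mx2; ring. Qed.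
Let cl_mul := zariski_closure_mul (@gen2_mul k A (invmx A *m torus2 t)).

Lemma gen2_torus2_powers n : G (torus2 (t ^+ n)).
Proof.
elim: n => [|n IH]; first by rewrite expr0 /torus2 invr1 -scalar_mx2; apply: gen2_1.
have := gen2_l1 (gen2_l2 IH); rewrite mulmxA mulKVmx ?unitmx_SL2 //.
by rewrite torus2M ?expf_neq0 // -exprS.
Qed.

Lemma zariski_closure_gen2_torus2 u : u != 0 -> cl (torus2 u).
Proof. by apply: (zariski_closure_torus2 t0 t_nonunity) => n; apply: gen2_torus2_powers. Qed.

Let G1 : G 1%:M := gen2_1 _ _.
Let GA : G A. Proof. by have := gen2_l1 G1; rewrite mulmx1. Qed.
Let GA' : G (invmx A). Proof. by have := gen2_li1 G1; rewrite mulmx1. Qed.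

Lemma zariski_closure_gen2_weyl : exists e f, [/\ e != 0, f != 0,
  cl (mx2 e f (- f^-1) 0) & cl (mx2 0 (- f) f^-1 e)].
Proof.
pose c := a * d - 1; have c0 : c != 0 by rewrite subr_eq0.
(* v makes the lower-right entry c v + d^2 / v of A torus2 v A vanish. *)
have [v vE] := closed_sqrt (- d ^+ 2 / c).
have cv2 : c * v ^+ 2 = - d ^+ 2 by rewrite vE; field.
have v0 : v != 0.
  apply/eqP => v0; move: cv2; rewrite v0 expr0n mulr0 => /esym/eqP.
  by rewrite oppr_eq0 expf_eq0 /= (negbTE d0).
pose e := a ^+ 2 * v + c / v; pose f := a * v + d / v; pose g := a * c * v + c * d / v.
pose W := A *m torus2 v *m A.
have WE : W = mx2 e f g 0.
  rewrite /W /torus2 !mul_mx2; congr mx2; rewrite /e /f /g /c; try by field; rewrite v0.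
  transitivity ((c * v ^+ 2 + d ^+ 2) / v); first by rewrite /c; field; rewrite v0.
  by rewrite cv2 addNr mul0r.
have evc : e * v * c = 1 - (a * d) *+ 2.
  transitivity (a ^+ 2 * (c * v ^+ 2) + c ^+ 2); first by rewrite /e; field; rewrite v0.
  by rewrite cv2 /c; ring.
have e0 : e != 0.
  apply: contra_neq ad2 => ez; move: evc; rewrite ez !mul0r => /esym/eqP.
  by rewrite subr_eq0 eq_sym => /eqP.
have sW : inSL2 W by rewrite /inSL2 !det_mulmx sA (det_torus2 v0) !mul1r.
move: sW; rewrite /inSL2 WE det_mx2 mulr0 sub0r => /eqP; rewrite eqr_oppLR => /eqP fg.
have f0 : f != 0.
  by apply: contraPneq fg => ->; rewrite mul0r => /eqP; rewrite eq_sym oppr_eq0 oner_eq0.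
have gE : g = - f^-1 by apply: (mulfI f0); rewrite fg mulrN mulfV.
have invW : invmx W = mx2 0 (- f) f^-1 e.
  by rewrite WE gE invmx_mx2 ?opprK // mulr0 sub0r mulrN opprK mulfV.
exists e, f; split => //.
  rewrite -gE -WE; apply: cl_mul; last exact: zariski_closure_sub.
  by apply: cl_mul; [apply: zariski_closure_sub | apply: zariski_closure_gen2_torus2].
have uD := unitmx_SL2 (det_torus2 v0); have uA := unitmx_SL2 sA.
rewrite -invW !invmxM ?unitmx_mul ?uA ?uD // invmx_torus2 //.
apply: cl_mul; first exact: zariski_closure_sub.
apply: cl_mul; last exact: zariski_closure_sub.
by apply: zariski_closure_gen2_torus2; rewrite invr_eq0.
Qed.

Lemma zariski_dense_gen2_pair : zariski_dense_SL2 G.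
Proof.
have [e [f [e0 f0 clW clW']]] := zariski_closure_gen2_weyl.
have := zariski_closure_SL2 (@gen2_mul k A (invmx A *m torus2 t)) zariski_closure_gen2_torus2.
by move=> /(_ e f e0 f0 clW clW') clG p pG g /clG; apply.
Qed.
End DensePair.

Section Construction.
Variable k : closedFieldType.
Hypothesis unc : uncountable k.

(* The equations tr A = t1 and tr (A^-1 torus2 t) = t2 for A = mx2 a 1 (a d - 1) d
   are linear in (a, d); the four side conditions exclude the roots of a nonzero
   polynomial in t. *)
Lemma exists_gen_pair_parameters (t1 t2 : k) : ~ (t1 = 0 /\ t2 = 0) ->
  exists a d t, [/\ t != 0, forall n, (0 < n)%N -> t ^+ n != 1, d != 0,
    a * d != 1 & (a * d) *+ 2 != 1] /\ (a + d = t1 /\ d * t + a / t = t2).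
Proof.
move=> nt.
pose G : {poly k} := (t1 *: 'X^2 - t2 *: 'X) * (t2 *: 'X - t1%:P).
pose W : {poly k} := ('X^2 - 1) ^+ 2.
have nz_at0 (P : {poly k}) : P.[0] = 1 -> P != 0.
  by move=> P1; apply/eqP => P0; move: P1; rewrite P0 horner0 => /eqP; rewrite eq_sym oner_eq0.
have GE x : G.[x] = (t1 * x ^+ 2 - t2 * x) * (t2 * x - t1) by rewrite !hornerE /=.
have WE x : W.[x] = (x ^+ 2 - 1) ^+ 2 by rewrite !hornerE /=.
have FE x : (t2 *: 'X - t1%:P).[x] = t2 * x - t1 by rewrite !hornerE /=.
have F0 : t2 *: 'X - t1%:P != 0.
  apply/eqP => F0; apply: nt; move: (FE 0) (FE 1).
  rewrite F0 !horner0 mulr0 mulr1 sub0r => /esym/eqP; rewrite oppr_eq0 => /eqP t10.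
  by rewrite t10 subr0 => <-.
have R0 : 'X * (t2 *: 'X - t1%:P) * (W - G) * (W - G *+ 2) != 0.
  by rewrite !mulf_neq0 ?polyX_eq0 //; apply: nz_at0; rewrite hornerD hornerN ?hornerMn GE WE; ring.
have [t [Rt tn]] := uncountable_exists_nonunity unc R0.
move: Rt; rewrite !rootM rootX !negb_or !rootE FE !hornerD !hornerN hornerMn GE WE !subr_eq0.
move=> /andP [/andP [/andP [t0 Ft] WG] WG2].
have w0 : t ^+ 2 - 1 != 0 by rewrite subr_eq0 tn.
have w20 : (t ^+ 2 - 1) ^+ 2 != 0 by rewrite expf_neq0.
pose d := (t2 * t - t1) / (t ^+ 2 - 1); pose a := t1 - d.
have adE : a * d = (t1 * t ^+ 2 - t2 * t) * (t2 * t - t1) / (t ^+ 2 - 1) ^+ 2.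
  by rewrite /a /d; field.
exists a, d, t; split; [split => // | split].
- by rewrite /d mulf_neq0 ?invr_eq0 // subr_eq0.
- by rewrite adE; apply: contra_neq WG => adv1; rewrite -[RHS](divfK w20) adv1 mul1r.
- by rewrite adE; apply: contra_neq WG2 => adv2; rewrite -[RHS](divfK w20) mulrnAl adv2 mul1r.
- by rewrite /a subrK.
- by rewrite /a /d; field; rewrite ?w0 ?t0.
Qed.

Lemma exists_dense_pair_of_tr (t1 t2 : k) : ~ (t1 = 0 /\ t2 = 0) ->
  exists x1 x2 : 'M[k]_2, [/\ inSL2 x1, inSL2 x2, ~ central x1 & ~ central x2] /\
    [/\ \tr x1 = t1, \tr x2 = t2 & zariski_dense_SL2 (gen2 x1 x2)].
Proof.
move=> /exists_gen_pair_parameters [a [d [t [[t0 tn d0 ad1 ad2] [tr1 tr2]]]]].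
have detA : a * d - 1 * (a * d - 1) = 1 by ring.
have sA : inSL2 (mx2 a 1 (a * d - 1) d) by rewrite /inSL2 det_mx2.
have BE : invmx (mx2 a 1 (a * d - 1) d) *m torus2 t =
    mx2 (d * t) (- t^-1) (- (a * d - 1) * t) (a / t).
  by rewrite invmx_mx2 // mul_mx2; congr mx2; ring.
exists (mx2 a 1 (a * d - 1) d), (invmx (mx2 a 1 (a * d - 1) d) *m torus2 t).
split; split => //.
- by rewrite /inSL2 det_mulmx det_inv sA invr1 mul1r (det_torus2 t0).
- by rewrite /central is_scalar_mx2 => [[/eqP]]; rewrite oner_eq0.
- by rewrite /central BE is_scalar_mx2 => [[/eqP]]; rewrite oppr_eq0 invr_eq0 (negbTE t0).
- by rewrite tr_mx2.
- by rewrite BE tr_mx2.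
- exact: zariski_dense_gen2_pair.
Qed.
End Construction.

Theorem lemma3p10 (k : closedFieldType) (hk : uncountable k)
  (g1 g2 : 'M[k]_2) (hg1 : inSL2 g1) (hg2 : inSL2 g2)
  (nc1 : ~ central g1) (nc2 : ~ central g2) :
  (exists x1 x2 : 'M[k]_2,
      conj_class g1 x1 /\ conj_class g2 x2 /\ zariski_dense_SL2 (gen2 x1 x2))
  <-> ~ (involution_mod_center g1 /\ involution_mod_center g2).
Proof.
split.
  move=> [x1 [x2 [c1 [c2 dense]]]].
  move=> [/(involution_mod_centerE nc1) t1 /(involution_mod_centerE nc2) t2].
  have [tx1 dx1] := conj_class_tr_det c1; have [tx2 dx2] := conj_class_tr_det c2.
  by apply: (gen2_tr0_not_dense _ _ _ _ dense); rewrite /inSL2 ?dx1 ?dx2 ?tx1 ?tx2.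
move=> not_both_inv.
have [|x1 [x2 [[sx1 sx2 ncx1 ncx2] [tx1 tx2 dense]]]] :=
  exists_dense_pair_of_tr hk (t1 := \tr g1) (t2 := \tr g2).
  move=> [/(involution_mod_centerE nc1) i1 /(involution_mod_centerE nc2) i2].
  exact: not_both_inv.
by exists x1, x2; split; [|split] => //; apply: conj_class_of_tr; rewrite ?tx1 ?tx2.
Qed.
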